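(* Let $S$ be a linearly dependent set of permutations, each of order larger than one. Then: (a) $S$ is not a singleton; (b) if $|S|=2$, then both permutations in $S$ have order two; (c) if $|S|=3$ and all permutations in $S$ have the same order, then this common order is three.
   Context: A $k$-permutation is a bijection of $[k]=\{1,\dots,k\}$. The gradient polynomial of a $k$-permutation $\pi$ is $P_\pi(\alpha,\beta)=k!\sum_{m\in[k]}\left(\frac{k-m}{1-\alpha}-\frac{m-1}{\alpha}\right)\left(\frac{k-\pi(m)}{1-\beta}-\frac{\pi(m)-1}{\beta}\right)\frac{\alpha^{m-1}(1-\alpha)^{k-m}\beta^{\pi(m)-1}(1-\beta)^{k-\pi(m)}}{(m-1)!(k-m)!(\pi(m)-1)!(k-\pi(m))!}$. A set $S$ of (distinct) permutations is called linearly dependent if the gradient polynomials $P_\pi$, $\pi\in S$, are linearly dependent over $\mathbb{R}$, i.e., there are reals $t_\pi$, not all zero, with $\sum_{\pi\in S}t_\pi P_\pi=0$. *)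

From HB Require Import structures.
From mathcomp Require Import all_boot all_order all_algebra all_fingroup.
From mathcomp Require Import reals.
Set Implicit Arguments. Unset Strict Implicit. Unset Printing Implicit Defensive.
Import Order.TTheory GRing.Theory Num.Theory.
Local Open Scope ring_scope.

(* The size k is called the "order" of the permutation in the paper.
   Elements of [k] = {1..k} are represented 0-based by 'I_k, so the paper's
   m corresponds to (val m).+1 and pi(m) to (val (pi m)).+1. *)
Definition anyperm := {k : nat & 'S_k}.

(* Gradient polynomial P_pi(alpha, beta), written literally as in the paper
   (with 1-based m := i.+1, pi(m) := (pi i).+1). *)
Definition gradP (R : realType) (k : nat) (pi : 'S_k) (a b : R) : R :=
  (k`!)%:R * \sum_(i < k)
    ( ((k - i.+1)%:R / (1 - a) - (i.+1 - 1)%:R / a)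
    * ((k - (pi i).+1)%:R / (1 - b) - ((pi i).+1 - 1)%:R / b)
    * (a ^+ (i.+1 - 1) * (1 - a) ^+ (k - i.+1)
       * b ^+ ((pi i).+1 - 1) * (1 - b) ^+ (k - (pi i).+1))
    / (((i.+1 - 1)`! * (k - i.+1)`! * ((pi i).+1 - 1)`! * (k - (pi i).+1)`!)%:R) ).

(* A duplicate-free list S of permutations is linearly dependent if there are
   real coefficients t, not all zero on S, with sum t_pi P_pi = 0 as rational
   functions, i.e. at every (alpha, beta) with alpha, beta not in {0, 1}. *)
Definition lin_dep (R : realType) (S : seq anyperm) : Prop :=
  exists t : anyperm -> R,
    (exists2 x, x \in S & t x != 0) /\
    forall a b : R, a != 0 -> a != 1 -> b != 0 -> b != 1 ->
      \sum_(x <- S) t x * gradP (projT2 x) a b = 0.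

(* Substituting a = x/(1+x), b = y/(1+y) and clearing denominators turns the
   gradient polynomial of pi : S_k into k! * sum_m G_m(x) G_(pi m)(y) for
   polynomials G_m = bern_grad k m, and sum_m c_m G_m = 0 forces all c_m to be
   equal (the sum telescopes to sum_i (c_i - c_(i+1)) w_i x^i).  Hence if
   sum_pi t_pi P_pi = 0 over permutations of one size k, the matrix
   N = sum_pi t_pi (perm_mx pi) has the form N_mj = u_m + v_j; as all its row and
   column sums equal sum_pi t_pi, it is constant.  With fewer than k permutations
   some entry of N vanishes, so N = 0, and at most three distinct permutation
   matrices are linearly independent.  For two permutations of sizes k < k', the
   term of the smaller one carries an extra factor (1+x)^(k'-k), so evaluating at
   x = -1 isolates the larger one, whose contribution there is nonzero. *)

From HB Require Import structures.
From mathcomp Require Import all_boot all_order all_algebra all_fingroup.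
From mathcomp Require Import reals.
From mathcomp Require Import ring lra zify.
Import Order.TTheory GRing.Theory Num.Theory.
Set Implicit Arguments. Unset Strict Implicit. Unset Printing Implicit Defensive.

Local Open Scope ring_scope.

Section PermMxCombination.
Variables (F : pzRingType) (n : nat).
Implicit Types (s : seq 'S_n) (t : 'S_n -> F).

Definition perm_mx_comb s t : 'M[F]_n := \sum_(p <- s) t p *: perm_mx p.

Lemma perm_mx_combE s t m j :
  perm_mx_comb s t m j = \sum_(p <- s) t p * (p m == j)%:R.
Proof. by rewrite summxE; apply: eq_bigr => p _; rewrite !mxE. Qed.

Lemma sum_perm_mx_comb_row s t m (f : 'I_n -> F) :
  \sum_j perm_mx_comb s t m j * f j = \sum_(p <- s) t p * f (p m).
Proof.
under eq_bigr do rewrite perm_mx_combE mulr_suml.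
rewrite exchange_big /=; apply: eq_bigr => p _.
rewrite (bigD1 (p m)) //= eqxx mulr1 big1 ?addr0 // => j /negbTE.
by rewrite eq_sym => ->; rewrite mulr0 mul0r.
Qed.

Lemma perm_mx_comb_row_sum s t m :
  \sum_j perm_mx_comb s t m j = \sum_(p <- s) t p.
Proof.
transitivity (\sum_j perm_mx_comb s t m j * 1); first by under [RHS]eq_bigr do rewrite mulr1.
by rewrite sum_perm_mx_comb_row; under eq_bigr do rewrite /= mulr1.
Qed.

Lemma perm_mx_comb_col_sum s t j :
  \sum_m perm_mx_comb s t m j = \sum_(p <- s) t p.
Proof.
under eq_bigr do rewrite perm_mx_combE.
rewrite exchange_big /=; apply: eq_bigr => p _; rewrite -mulr_sumr.
rewrite (reindex_inj (@perm_inj _ p^-1)) /=.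
under eq_bigr do rewrite permKV.
by rewrite (bigD1 j) //= eqxx big1 ?addr0 ?mulr1 // => m /negbTE ->.
Qed.

Lemma perm_mx_comb_isolated s t p m : uniq s -> p \in s ->
  (forall q, q \in s -> q m = p m -> q = p) -> perm_mx_comb s t m (p m) = t p.
Proof.
move=> s_uniq p_in p_iso; rewrite perm_mx_combE (big_rem p) //= eqxx mulr1.
rewrite big1_seq ?addr0 // => q /andP [_]; rewrite mem_rem_uniq // inE.
case/andP=> q_neq_p q_in; case: eqP => [/(p_iso q q_in) q_eq_p|_]; last by rewrite mulr0.
by move: q_neq_p; rewrite q_eq_p eqxx.
Qed.

Lemma perm_mx_comb_rem s t p :
  p \in s -> t p = 0 -> perm_mx_comb (rem p s) t = perm_mx_comb s t.
Proof. by move=> p_in tp0; rewrite [RHS](big_rem p) //= tp0 scale0r add0r. Qed.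

End PermMxCombination.

Lemma mx_additive_sums_const (F : numDomainType) n (A : 'M[F]_n.+1) (T : F) :
  (forall m j, A m j - A ord0 j = A m ord0 - A ord0 ord0) ->
  (forall m, \sum_j A m j = T) -> (forall j, \sum_m A m j = T) ->
  forall m j, A m j *+ n.+1 = T.
Proof.
move=> A_add rowT colT.
have col0 m : A m ord0 = A ord0 ord0.
  have : \sum_j (A m j - A ord0 j) = 0 by rewrite sumrB !rowT subrr.
  under eq_bigr do rewrite A_add.
  by rewrite sumr_const card_ord => /eqP; rewrite mulrn_eq0 /= subr_eq0 => /eqP.
have row0 m j : A m j = A ord0 j by apply/eqP; rewrite -subr_eq0 A_add col0 subrr.
move=> m j; rewrite -(colT j) row0.
by under eq_bigr do rewrite row0; rewrite sumr_const card_ord.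
Qed.

Lemma perm_neq_at n (p q : 'S_n) : p != q -> exists m, p m != q m.
Proof.
move=> p_neq_q; apply/forallPn; apply: contra p_neq_q => /forallP pq.
by apply/eqP/permP => m; apply/eqP.
Qed.

Lemma exists_isolated_perm n (s : seq 'S_n.+1) : uniq s -> (0 < size s <= 3)%N ->
  exists2 p, p \in s & exists m, forall q, q \in s -> q m = p m -> q = p.
Proof.
case: s => [|p1 [|p2 [|p3 [|]]]] //=; rewrite ?inE ?andbT.
- by move=> _ _; exists p1; rewrite ?inE //; exists ord0 => q; rewrite inE => /eqP.
- move=> p12 _; have [m p12m] := perm_neq_at p12.
  exists p1; rewrite ?inE ?eqxx //; exists m => q; rewrite !inE => /orP [] /eqP -> //.
  by move/esym/eqP; rewrite (negbTE p12m).
rewrite !negb_or => /andP [_ p23] _; have [m p23m] := perm_neq_at p23.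
have [p12m|p12m] := eqVneq (p1 m) (p2 m).
- exists p3; rewrite ?inE ?eqxx ?orbT //; exists m => q; rewrite !inE.
  by case/or3P => /eqP -> // => [|]; rewrite ?p12m => /eqP; rewrite (negbTE p23m).
- exists p2; rewrite ?inE ?eqxx ?orbT //; exists m => q; rewrite !inE.
  by case/or3P => /eqP -> // /eqP; rewrite ?(negbTE p12m) // eq_sym (negbTE p23m).
Qed.

Lemma perm_mx_comb_free (F : pzRingType) n (s : seq 'S_n.+1) (t : 'S_n.+1 -> F) :
  uniq s -> (size s <= 3)%N -> perm_mx_comb s t = 0 -> forall p, p \in s -> t p = 0.
Proof.
have [k] := ubnP (size s); elim: k s => // k IHk s size_s s_uniq s_le3 comb0 q.
have [->//|s_neq0] := eqVneq s [::].
have [|p p_in [m p_iso]] := exists_isolated_perm s_uniq; first by rewrite lt0n size_eq0 s_neq0.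
have tp0 : t p = 0 by rewrite -(perm_mx_comb_isolated t s_uniq p_in p_iso) comb0 mxE.
have [->//|q_neq_p q_in] := eqVneq q p.
apply: (IHk (rem p s)); rewrite ?rem_uniq ?perm_mx_comb_rem ?mem_rem_uniq ?inE ?q_neq_p //.
- by rewrite size_rem // -ltnS (leq_trans _ size_s) // prednK // lt0n size_eq0.
- by rewrite size_rem // (leq_trans (leq_pred _)).
Qed.

Section BernsteinGradients.
Variable R : realType.

Lemma natr_fact_neq0 n : (n`!%:R : R) != 0.
Proof. by rewrite pnatr_eq0 -lt0n fact_gt0. Qed.

(* After the substitution a = x/(1+x), the m-th factor of a summand of gradP,
   ((k-m-1)/(1-a) - m/a) a^m (1-a)^(k-m-1) / (m! (k-m-1)!), equals
   bern_grad k m x / (1+x)^(k-2). *)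
Definition bern_grad (k m : nat) (x : R) : R :=
  ((k - m.+1)%:R * x ^+ m - m%:R * x ^+ m.-1) / (m`! * (k - m.+1)`!)%:R.

Lemma sum_bern_grad n (c : nat -> R) x :
  \sum_(m < n.+1) c m * bern_grad n.+1 m x =
  \sum_(i < n) (c i - c i.+1) / (i`! * (n - i.+1)`!)%:R * x ^+ i.
Proof.
rewrite /bern_grad.
under eq_bigr do rewrite mulrBl mulrBr.
rewrite sumrB big_ord_recr big_ord_recl /=.
rewrite subnn mulr0n !(mul0r, mulr0) addr0 add0r -sumrB; apply: eq_bigr => i _.
rewrite /bump /= add0n add1n.
have i_lt := ltn_ord i.
rewrite (_ : n.+1 - i.+1 = (n - i.+1).+1)%N; last by lia.
rewrite (_ : n.+1 - i.+2 = n - i.+1)%N; last by lia.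
rewrite !factS !natrM.
by field; rewrite !natr_fact_neq0 !(addrC 1) !natr1 !pnatr_eq0.
Qed.

Lemma poly_eq0_on_pos (p : {poly R}) : (forall x, 0 < x -> p.[x] = 0) -> p = 0.
Proof.
move=> p_pos0; apply/eqP; apply: contraT => p_neq0.
have := @max_poly_roots _ p [seq i.+1%:R | i <- iota 0 (size p)] p_neq0.
rewrite size_map size_iota ltnn; apply.
- by apply/allP => _ /mapP [i _ ->]; apply/rootP/p_pos0; rewrite ltr0n.
- by rewrite map_inj_uniq ?iota_uniq // => i j /eqP; rewrite eqr_nat => /eqP [].
Qed.

Definition bern_grad_poly n (c : 'I_n.+1 -> R) : {poly R} :=
  \poly_(i < n) ((c (inord i) - c (inord i.+1)) / (i`! * (n - i.+1)`!)%:R).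

Lemma horner_bern_grad_poly n (c : 'I_n.+1 -> R) x :
  (bern_grad_poly c).[x] = \sum_(m < n.+1) c m * bern_grad n.+1 m x.
Proof.
transitivity (\sum_(m < n.+1) c (inord m) * bern_grad n.+1 m x).
  by rewrite (sum_bern_grad _ (fun i => c (inord i))) horner_poly.
by apply: eq_bigr => m _; rewrite inord_val.
Qed.

Lemma bern_grad_poly_eq0 n (c : 'I_n.+1 -> R) :
  bern_grad_poly c = 0 -> forall m, c m = c ord0.
Proof.
move=> c0.
have c_step i : (i < n)%N -> c (inord i) = c (inord i.+1).
  move=> i_lt; move/(congr1 (fun p : {poly R} => p`_i)): c0.
  rewrite coef_poly coef0 i_lt => /eqP.
  rewrite mulf_eq0 invr_eq0 natrM mulf_eq0 !(negbTE (natr_fact_neq0 _)) !orbF.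
  by rewrite subr_eq0 => /eqP.
have c_const i : (i <= n)%N -> c (inord i) = c ord0.
  elim: i => [_|i IHi i_lt]; first by congr c; apply: val_inj; rewrite /= inordK.
  by rewrite -c_step // IHi // ltnW.
by move=> m; rewrite -(c_const m) ?inord_val // -ltnS.
Qed.

Lemma bern_grad_comb_eq0 n (c : 'I_n.+1 -> R) :
  (forall x, 0 < x -> \sum_m c m * bern_grad n.+1 m x = 0) -> forall m, c m = c ord0.
Proof.
move=> c0; apply/bern_grad_poly_eq0/poly_eq0_on_pos => x x_gt0.
by rewrite horner_bern_grad_poly c0.
Qed.

Lemma bern_factor_subst e m (x : R) : (m < e.+2)%N -> 0 < x ->
  let a := x / (1 + x) in
  ((e.+2 - m.+1)%:R / (1 - a) - m%:R / a) * (a ^+ m * (1 - a) ^+ (e.+2 - m.+1))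
    * (1 + x) ^+ e
  = (e.+2 - m.+1)%:R * x ^+ m - m%:R * x ^+ m.-1.
Proof.
move=> m_lt x_gt0 a.
have x_neq0 : x != 0 by rewrite gt_eqF.
have x1_neq0 : 1 + x != 0 by rewrite gt_eqF // addr_gt0.
have -> : 1 - a = (1 + x)^-1 by rewrite /a; field.
rewrite /a expr_div_n !exprVn.
case: m m_lt => [|m] m_lt.
  rewrite subn1 /= !expr0 exprS.
  by field; rewrite expf_neq0 // x_neq0 x1_neq0.
have [d ->] : exists d, e = (m + d)%N by exists (e - m)%N; lia.
rewrite !subSS addKn /= exprS [(1 + x) ^+ m.+1]exprS exprD.
by field; rewrite !expf_neq0 // x_neq0 x1_neq0.
Qed.

Lemma gradP_subst n (p : 'S_n.+2) (x y : R) : 0 < x -> 0 < y ->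
  gradP p (x / (1 + x)) (y / (1 + y)) * ((1 + x) ^+ n * (1 + y) ^+ n)
  = (n.+2)`!%:R * \sum_(m < n.+2) bern_grad n.+2 m x * bern_grad n.+2 (p m) y.
Proof.
move=> x_gt0 y_gt0.
rewrite /gradP -mulrA mulr_suml; congr (_ * _); apply: eq_bigr => m _.
rewrite !subn1 /= /bern_grad.
rewrite -(bern_factor_subst (ltn_ord m) x_gt0) -(bern_factor_subst (ltn_ord (p m)) y_gt0).
by rewrite !natrM !invfM; ring.
Qed.

End BernsteinGradients.

Section GradientCombinations.
Variable R : realType.

Lemma pos_div1D_in01 (x : R) : 0 < x -> 0 < x / (1 + x) < 1.
Proof.
move=> x_gt0; have x1_gt0 : 0 < 1 + x by rewrite addr_gt0.
by rewrite divr_gt0 //= ltr_pdivrMr // mul1r ltrDr.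
Qed.

Lemma bern_grad_bilinear_eq0 n (A : 'M[R]_n.+1) :
  (forall x y, 0 < x -> 0 < y ->
     \sum_m \sum_j A m j * (bern_grad n.+1 m x * bern_grad n.+1 j y) = 0) ->
  forall m j, A m j - A ord0 j = A m ord0 - A ord0 ord0.
Proof.
move=> A0.
have rows_eq y m : 0 < y ->
    \sum_j A m j * bern_grad n.+1 j y = \sum_j A ord0 j * bern_grad n.+1 j y.
  move=> y_gt0.
  apply: (bern_grad_comb_eq0 (c := fun i => \sum_j A i j * bern_grad n.+1 j y)) => x x_gt0.
  rewrite -[RHS](A0 x y x_gt0 y_gt0); apply: eq_bigr => i _; rewrite mulr_suml.
  by apply: eq_bigr => j _; rewrite mulrAC mulrA.
move=> m; apply: (bern_grad_comb_eq0 (c := fun j => A m j - A ord0 j)) => y y_gt0.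
by under eq_bigr do rewrite mulrBl; rewrite sumrB rows_eq ?subrr.
Qed.

Lemma gradP_comb_perm_mx n (s : seq 'S_n.+2) (t : 'S_n.+2 -> R) :
  (forall a b, 0 < a < 1 -> 0 < b < 1 -> \sum_(p <- s) t p * gradP p a b = 0) ->
  forall m j, perm_mx_comb s t m j *+ n.+2 = \sum_(p <- s) t p.
Proof.
move=> comb0; apply: mx_additive_sums_const; last 2 first.
- exact: perm_mx_comb_row_sum.
- exact: perm_mx_comb_col_sum.
apply: bern_grad_bilinear_eq0 => x y x_gt0 y_gt0.
have := congr1 (fun z => z * ((1 + x) ^+ n * (1 + y) ^+ n))
  (comb0 _ _ (pos_div1D_in01 x_gt0) (pos_div1D_in01 y_gt0)).
rewrite mul0r mulr_suml.
under eq_bigr do rewrite -mulrA gradP_subst // mulrCA.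
rewrite -mulr_sumr => /eqP; rewrite mulf_eq0 (negbTE (natr_fact_neq0 _ _)) /= => /eqP sum0.
rewrite -[RHS]sum0.
under [in RHS]eq_bigr do rewrite mulr_sumr.
rewrite [RHS]exchange_big /=; apply: eq_bigr => m _.
under eq_bigr do rewrite mulrCA.
rewrite -mulr_sumr (sum_perm_mx_comb_row _ _ _ (fun j => bern_grad n.+2 j y)) mulr_sumr.
by apply: eq_bigr => p _; rewrite mulrCA.
Qed.

Lemma ord_notin_small k (r : seq 'I_k) : (size r < k)%N -> exists j, j \notin r.
Proof.
move=> r_small; apply/forallPn; apply: contraTN r_small => /forallP r_full.
rewrite -leqNgt -{1}(card_ord k) (leq_trans _ (card_size r)) // subset_leq_card //.
by apply/subsetP => j _; apply: r_full.
Qed.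

Lemma gradP_comb_perm_mx_eq0 n (s : seq 'S_n.+2) (t : 'S_n.+2 -> R) :
  (size s < n.+2)%N ->
  (forall a b, 0 < a < 1 -> 0 < b < 1 -> \sum_(p <- s) t p * gradP p a b = 0) ->
  perm_mx_comb s t = 0.
Proof.
move=> s_small comb0.
have [j j_notin] : exists j, j \notin [seq p ord0 | p : 'S_n.+2 <- s].
  by apply: ord_notin_small; rewrite size_map.
have sum_t0 : \sum_(p <- s) t p = 0.
  rewrite -(gradP_comb_perm_mx comb0 ord0 j) perm_mx_combE big1_seq ?mul0rn //.
  move=> p /andP [_ p_in]; case: eqP => [pj|_]; last by rewrite mulr0.
  by move: j_notin; rewrite -pj map_f.
apply/matrixP => m i; rewrite mxE; apply/eqP.
by have := gradP_comb_perm_mx comb0 m i; rewrite sum_t0 => /eqP; rewrite mulrn_eq0.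
Qed.

Lemma gradP_comb_small_eq0 n (s : seq 'S_n.+2) (t : 'S_n.+2 -> R) :
  uniq s -> (size s <= 3)%N -> (size s < n.+2)%N ->
  (forall a b, 0 < a < 1 -> 0 < b < 1 -> \sum_(p <- s) t p * gradP p a b = 0) ->
  forall p, p \in s -> t p = 0.
Proof.
move=> s_uniq s_le3 s_small comb0.
exact: perm_mx_comb_free s_uniq s_le3 (gradP_comb_perm_mx_eq0 s_small comb0).
Qed.

Lemma bern_grad_comb_neg1 n1 n2 e (c1 : 'I_n1.+1 -> R) (c2 : 'I_n2.+1 -> R) :
  (forall x, 0 < x -> (1 + x) ^+ e.+1 * \sum_m c1 m * bern_grad n1.+1 m x
                        + \sum_m c2 m * bern_grad n2.+1 m x = 0) ->
  \sum_m c2 m * bern_grad n2.+1 m (-1) = 0.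
Proof.
move=> c0; rewrite -horner_bern_grad_poly.
have P0 : ('X + 1) ^+ e.+1 * bern_grad_poly c1 + bern_grad_poly c2 = 0.
  apply: poly_eq0_on_pos => x x_gt0.
  by rewrite !hornerE !horner_bern_grad_poly [x + 1]addrC c0.
by move/(congr1 (horner^~ (-1))): P0; rewrite !hornerE addNr expr0n mul0r add0r.
Qed.

Lemma bern_grad_neg1_lt n : bern_grad n.+2 1 (-1 : R) < bern_grad n.+2 0 (-1).
Proof.
rewrite /bern_grad !subSS !subn0 /= expr1 expr0 !mulr1 subr0.
apply: (@lt_trans _ _ 0); last by rewrite divr_gt0 ?ltr0n ?muln_gt0 ?fact_gt0.
rewrite ltr_pdivrMr ?mul0r ?ltr0n ?muln_gt0 ?fact_gt0 //.
by have := ler0n R n; lra.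
Qed.

Lemma perm_bern_grad_neg1 n (p : 'S_n.+2) :
  ~ (forall y : R, 0 < y ->
       \sum_(m < n.+2) bern_grad n.+2 m (-1) * bern_grad n.+2 (p m) y = 0).
Proof.
move=> sum0.
have comb0 (y : R) : 0 < y ->
    \sum_j bern_grad n.+2 ((p^-1)%g j) (-1) * bern_grad n.+2 j y = 0.
  move=> y_gt0; rewrite -[RHS](sum0 y y_gt0) (reindex_inj (@perm_inj _ p)) /=.
  by apply: eq_bigr => m _; rewrite permK.
have c_const := bern_grad_comb_eq0 comb0.
have := c_const (p ord0); rewrite -(c_const (p (inord 1))) !permK.
by rewrite inordK // => /eqP; rewrite gt_eqF ?bern_grad_neg1_lt.
Qed.

Lemma gradP_pair_mixed n1 n2 (p1 : 'S_n1.+2) (p2 : 'S_n2.+2) (t1 t2 : R) :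
  (n1 < n2)%N ->
  (forall a b, 0 < a < 1 -> 0 < b < 1 -> t1 * gradP p1 a b + t2 * gradP p2 a b = 0) ->
  t2 = 0.
Proof.
move=> n12 comb0; have [//|t2_neq0] := eqVneq t2 0; exfalso.
have [e n2E] : exists e, n2 = (n1 + e.+1)%N by exists (n2 - n1.+1)%N; lia.
apply: (perm_bern_grad_neg1 (p := p2)) => y y_gt0.
pose c1 m := t1 * (n1.+2)`!%:R * (1 + y) ^+ e.+1 * bern_grad n1.+2 (p1 m) y.
pose c2 m := t2 * (n2.+2)`!%:R * bern_grad n2.+2 (p2 m) y.
have sum_c2 : \sum_m c2 m * bern_grad n2.+2 m (-1) = 0.
  apply: (bern_grad_comb_neg1 (e := e) (c1 := c1)) => x x_gt0.
  have W : (1 + x) ^+ n2 * (1 + y) ^+ n2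
      = (1 + x) ^+ n1 * (1 + y) ^+ n1 * ((1 + x) ^+ e.+1 * (1 + y) ^+ e.+1).
    by rewrite n2E !exprD mulrACA.
  have := congr1 (fun z => z * ((1 + x) ^+ n2 * (1 + y) ^+ n2))
    (comb0 _ _ (pos_div1D_in01 x_gt0) (pos_div1D_in01 y_gt0)).
  rewrite mul0r mulrDl -(mulrA t1) -(mulrA t2) (gradP_subst p2 x_gt0 y_gt0).
  rewrite W (mulrA (gradP p1 _ _)) (gradP_subst p1 x_gt0 y_gt0) => sum0.
  rewrite -[RHS]sum0 /c1 /c2 !mulr_sumr mulr_suml mulr_sumr.
  by congr (_ + _); apply: eq_bigr => m _; ring.
have : t2 * (n2.+2)`!%:R
       * \sum_(m < n2.+2) bern_grad n2.+2 m (-1) * bern_grad n2.+2 (p2 m) y = 0.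
  by rewrite -[RHS]sum_c2 mulr_sumr; apply: eq_bigr => m _; rewrite /c2; ring.
by move/eqP; rewrite !mulf_eq0 (negbTE t2_neq0) (negbTE (natr_fact_neq0 _ _)) => /eqP.
Qed.

End GradientCombinations.

Local Notation anyperm_of p := (Tagged (fun k => 'S_k) p).

Lemma anyperm_seq_tag k (S : seq anyperm) :
  (forall x, x \in S -> tag x = k) -> exists s : seq 'S_k, S = [seq anyperm_of p | p <- s].
Proof.
elim: S => [|[j p] S IHS] S_i; first by exists [::].
have [|s ->] := IHS; first by move=> x x_in; apply: S_i; rewrite inE x_in orbT.
have /= ji := S_i _ (mem_head _ _); subst j.
by exists (p :: s).
Qed.

Lemma uniq_same_tag_size k (S : seq anyperm) :
  uniq S -> (forall x, x \in S -> tag x = k) -> (size S <= k`!)%N.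
Proof.
move=> S_uniq /anyperm_seq_tag [s S_s]; subst S.
move: S_uniq; rewrite size_map => /map_uniq.
by move/card_uniqP <-; rewrite -card_Sn max_card.
Qed.

Section LinearDependence.
Variable R : realType.

Lemma lin_dep_perm_eq (S S' : seq anyperm) : perm_eq S S' -> lin_dep R S -> lin_dep R S'.
Proof.
move=> SS' [t [[x x_in tx_neq0] comb0]]; exists t; split.
  by exists x; rewrite // -(perm_mem SS').
by move=> a b a0 a1 b0 b1; rewrite -(perm_big _ SS') comb0.
Qed.

Lemma not_lin_dep_same_size n (S : seq anyperm) :
  uniq S -> (forall x, x \in S -> tag x = n.+2) -> (size S <= 3)%N -> (size S < n.+2)%N ->
  ~ lin_dep R S.
Proof.
move=> S_uniq /anyperm_seq_tag [s S_s]; subst S.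
move: S_uniq; rewrite !size_map => /map_uniq s_uniq s_le3 s_small.
case=> t [[_ /mapP [p p_in ->] tp_neq0] comb0].
move/eqP: tp_neq0; apply.
apply: (gradP_comb_small_eq0 (t := fun q => t (anyperm_of q))) p_in => //.
move=> a b /andP [a_gt0 a_lt1] /andP [b_gt0 b_lt1].
rewrite -[RHS](comb0 a b) ?(gt_eqF a_gt0, lt_eqF a_lt1, gt_eqF b_gt0, lt_eqF b_lt1) //.
by rewrite big_map.
Qed.

Lemma not_lin_dep_mixed_pair (x1 x2 : anyperm) :
  (1 < tag x1 < tag x2)%N -> ~ lin_dep R [:: x1; x2].
Proof.
case: x1 x2 => [[|[|n1]] p1] [[|[|n2]] p2] //= n12 [t [[x x_in tx_neq0] comb0]].
have comb01 (a b : R) : 0 < a < 1 -> 0 < b < 1 ->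
    t (anyperm_of p1) * gradP p1 a b
    + t (anyperm_of p2) * gradP p2 a b = 0.
  move=> /andP [a_gt0 a_lt1] /andP [b_gt0 b_lt1].
  rewrite -[RHS](comb0 a b) ?(gt_eqF a_gt0, lt_eqF a_lt1, gt_eqF b_gt0, lt_eqF b_lt1) //.
  by rewrite !big_cons big_nil addr0.
have t2_0 := gradP_pair_mixed (n12 : (n1 < n2)%N) comb01.
apply: (@not_lin_dep_same_size n1 [:: anyperm_of p1]) => //.
  by move=> y /[!inE] /eqP ->.
exists t; split.
  exists (anyperm_of p1); rewrite ?mem_head //.
  by move: x_in tx_neq0; rewrite !inE => /orP [] /eqP -> //; rewrite t2_0 eqxx.
move=> a b a0 a1 b0 b1; have := comb0 a b a0 a1 b0 b1.
by rewrite !big_cons !big_nil /= t2_0 mul0r !addr0.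
Qed.

Lemma not_lin_dep_single (x : anyperm) : (1 < tag x)%N -> ~ lin_dep R [:: x].
Proof.
case: x => [[|[|n]] p] //= _.
by apply: (@not_lin_dep_same_size n) => // y /[!inE] /eqP ->.
Qed.

Lemma lin_dep_pair_tag (x1 x2 : anyperm) :
  x1 != x2 -> (1 < tag x1)%N -> (1 < tag x2)%N -> lin_dep R [:: x1; x2] ->
  tag x1 = 2%N /\ tag x2 = 2%N.
Proof.
move=> x12 x1_gt1 x2_gt1 dep; case: (ltngtP (tag x1) (tag x2)) => [lt12|lt21|eq12].
- by case: (@not_lin_dep_mixed_pair x1 x2); rewrite ?x1_gt1.
- case: (@not_lin_dep_mixed_pair x2 x1); rewrite ?x2_gt1 //.
  by apply: lin_dep_perm_eq dep; rewrite (perm_catC [:: x1] [:: x2]).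
have [n x1_tag] : exists n, tag x1 = n.+2.
  by move: x1_gt1; case: (tag x1) => [|[|n]] // _; exists n.
have x2_tag : tag x2 = n.+2 by rewrite -eq12.
case: n x1_tag x2_tag => [|n] x1_tag x2_tag; first by rewrite x1_tag x2_tag.
case: (@not_lin_dep_same_size n.+1 [:: x1; x2]) => //=; first by rewrite inE x12.
by move=> y /[!inE] /orP [] /eqP ->.
Qed.

Lemma lin_dep_same_tag_size3 k (S : seq anyperm) :
  uniq S -> size S = 3%N -> (forall x, x \in S -> tag x = k) -> (1 < k)%N ->
  lin_dep R S -> k = 3%N.
Proof.
move=> S_uniq S3 S_k; case: k S_k => [|[|[|[|n]]]] // S_k _ dep.
  by have := uniq_same_tag_size S_uniq S_k; rewrite S3.
by case: (@not_lin_dep_same_size n.+2 S); rewrite ?S3.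
Qed.

End LinearDependence.

Local Close Scope ring_scope.
Unset Implicit Arguments.

Theorem lemma12 (R : realType) (S : seq anyperm) :
  uniq S ->
  (forall x, x \in S -> 1 < tag x)%N ->
  lin_dep R S ->
  [/\ size S <> 1%N,
      (size S = 2%N -> forall x, x \in S -> tag x = 2%N) &
      (size S = 3%N -> (forall x y, x \in S -> y \in S -> tag x = tag y) ->
         forall x, x \in S -> tag x = 3%N)].
Proof.
move=> S_uniq S_gt1 dep; split.
- case: S S_uniq S_gt1 dep => [|x [|]] //= _ x_gt1 dep _.
  exact: not_lin_dep_single (x_gt1 x (mem_head _ _)) dep.
- case: S S_uniq S_gt1 dep => [|x1 [|x2 [|]]] //=.
  rewrite inE andbT => x12 S_gt1 dep _.
  have x2_in : x2 \in [:: x1; x2] by rewrite !inE eqxx orbT.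
  have [x1_tag x2_tag] := lin_dep_pair_tag x12 (S_gt1 _ (mem_head _ _)) (S_gt1 _ x2_in) dep.
  by move=> x /[!inE] /orP [] /eqP ->.
move=> S3 tag_eq x x_in.
apply: lin_dep_same_tag_size3 S_uniq S3 _ (S_gt1 x x_in) dep.
by move=> y y_in; apply: tag_eq.
Qed.
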